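(* Let $n\ge2$, $d\ge 3$, $\vec r$ a weight vector and $f\in M_{\ge0}(\vec r)$ nonzero. Then the coefficient of $x_n^d$ in $f$ is zero, so $f=\sum_{j=1}^{d}x_n^{d-j}h_j(x_0,\dots,x_{n-1})$ with $h_j$ homogeneous of degree $j$; write $q=h_2$, a quadratic form in $x_0,\dots,x_{n-1}$. Let $m_0$ be the smallest integer with $m_0>\frac{2(n+1)}{d}-1$. Then $\operatorname{rank}(q)\le m_0$. If $f\in M_{>0}(\vec r)$, the same conclusion holds with $m_0$ the smallest integer with $m_0\ge\frac{2(n+1)}{d}-1$.
   Context: A weight vector is $\vec r=(r_0,\dots,r_n)\in\mathbb{Z}^{n+1}$ with $r_0\ge r_1\ge\cdots\ge r_n$, $\vec r\neq\vec 0$ and $\sum_j r_j=0$. $M_{\ge0}(\vec r)$ (resp. $M_{>0}(\vec r)$) is the set of $f=\sum a_{i_0,\dots,i_n}x_0^{i_0}\cdots x_n^{i_n}\in\mathbb{C}[x_0,\dots,x_n]_d$ such that $\sum_j r_ji_j\ge 0$ (resp. $>0$) for every $(i_0,\dots,i_n)$ with $a_{i_0,\dots,i_n}\neq0$. The rank of a quadratic form $q=\sum_{i,j}a_{ij}x_ix_j$ ($a_{ij}=a_{ji}$) is the rank of the symmetric matrix $(a_{ij})$. *)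

From mathcomp Require Import all_boot all_algebra.
From mathcomp Require Import reals.
From mathcomp.real_closed Require Import complex.
From mathcomp.multinomials Require Import mpoly.

Set Implicit Arguments.
Unset Strict Implicit.
Unset Printing Implicit Defensive.

Import GRing.Theory Num.Theory.
Local Open Scope ring_scope.

Definition weight_vector (n : nat) (r : 'I_n.+1 -> int) : Prop :=
  [/\ (forall i j : 'I_n.+1, (i <= j)%N -> r j <= r i),
      (exists i, r i != 0) &
      \sum_(i < n.+1) r i = 0].

Definition rweight (n : nat) (r : 'I_n.+1 -> int) (m : 'X_{1..n.+1}) : int :=
  \sum_(j < n.+1) r j * (m j)%:Z.

Definition M_ge0 (R : realType) (n d : nat) (r : 'I_n.+1 -> int)
    (f : {mpoly R[i][n.+1]}) : Prop :=
  f \is d.-homog /\ forall m, m \in msupp f -> 0 <= rweight r m.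

Definition M_gt0 (R : realType) (n d : nat) (r : 'I_n.+1 -> int)
    (f : {mpoly R[i][n.+1]}) : Prop :=
  f \is d.-homog /\ forall m, m \in msupp f -> 0 < rweight r m.

(* x_n is the last variable, x_0..x_{n-1} are the first n variables. *)
Definition restr_mnm (n : nat) (m : 'X_{1..n.+1}) : 'X_{1..n} :=
  [multinom m (widen_ord (leqnSn n) i) | i < n].

(* h_j(x_0,...,x_{n-1}) : the coefficient of x_n^{d-j} in f, i.e.
   f = sum_j x_n^{d-j} h_j. *)
Definition hpart (R : realType) (n d j : nat) (f : {mpoly R[i][n.+1]})
    : {mpoly R[i][n]} :=
  \sum_(m <- msupp f | m ord_max == (d - j)%N) f@_m *: 'X_[restr_mnm m].

(* Symmetric matrix (a_ij) of a quadratic form q = sum_{i,j} a_ij x_i x_j. *)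
Definition qf_matrix (C : fieldType) (n : nat) (q : {mpoly C[n]}) : 'M[C]_n :=
  \matrix_(i < n, j < n)
    (if i == j then q@_(U_(i) *+ 2)%MM else q@_(U_(i) + U_(j))%MM / 2%:R).

Definition qf_rank (C : fieldType) (n : nat) (q : {mpoly C[n]}) : nat :=
  \rank (qf_matrix q).

From mathcomp Require Import all_boot all_order all_algebra.
From mathcomp Require Import reals.
From mathcomp.real_closed Require Import complex.
From mathcomp.multinomials Require Import mpoly.
From mathcomp Require Import zify ring.

(* Entry (a, b) of the matrix of q = h_2 is, up to a factor, the coefficient of
   x_a x_b x_n^(d-2) in f, so it vanishes unless r_a + r_b + (d-2) r_n >= 0
   (> 0 in the strict case). Since r is nonincreasing, if r_t + r_(K-t) +
   (d-2) r_n < 0 for some t <= K, the matrix vanishes on the rows >= t and the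
   columns >= K - t, whence rank q <= K. Otherwise, summing over t = 0..K and
   using sum_(t<=K) r_t = - sum_(t>K) r_t <= (n-K) (-r_n) gives
   (K+1) d <= 2(n+1) (resp. <), which fails for K = m_0. Finally the weight
   d r_n < 0 of x_n^d excludes that monomial. *)

Set Implicit Arguments.
Unset Strict Implicit.
Unset Printing Implicit Defensive.
Import Order.TTheory GRing.Theory Num.Theory.
Local Open Scope ring_scope.

Section CornerRank.
Variable F : fieldType.

Lemma pid_mx_mulmxE m n t (A : 'M[F]_(m, n)) i j :
  (pid_mx t *m A) i j = if (i < t)%N then A i j else 0.
Proof.
rewrite mxE (bigD1 i) //= big1 ?addr0 => [|k /negPf ki].
  by rewrite mxE eqxx /=; case: ifP; rewrite ?mul1r ?mul0r.
by rewrite mxE val_eqE eq_sym ki mul0r.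
Qed.

Lemma mulmx_pid_mxE m n s (A : 'M[F]_(m, n)) i j :
  (A *m pid_mx s) i j = if (j < s)%N then A i j else 0.
Proof.
rewrite mxE (bigD1 j) //= big1 ?addr0 => [|k /negPf kj].
  by rewrite mxE eqxx /=; case: ifP; rewrite ?mulr1 ?mulr0.
by rewrite mxE val_eqE kj mulr0.
Qed.

Lemma mxrank_corner0 m n t s (A : 'M[F]_(m, n)) :
  (t <= m)%N -> (s <= n)%N ->
  (forall (i : 'I_m) (j : 'I_n), (t <= i)%N -> (s <= j)%N -> A i j = 0) ->
  (\rank A <= t + s)%N.
Proof.
move=> tm sn A0.
have -> : A = pid_mx t *m A + (A - pid_mx t *m A) *m pid_mx s.
  apply/matrixP=> i j.
  rewrite mxE pid_mx_mulmxE mulmx_pid_mxE mxE mxE pid_mx_mulmxE.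
  by case: (ltnP i t) => ti; case: (ltnP j s) => sj; rewrite ?subrr ?addr0 ?add0r ?subr0 // A0.
apply: leq_trans (mxrank_add _ _) _; apply: leq_add.
  by apply: leq_trans (mxrankM_maxl _ _) _; rewrite rank_pid_mx.
by apply: leq_trans (mxrankM_maxr _ _) _; rewrite rank_pid_mx.
Qed.

(* [A] vanishes on the rows [>= t] and the columns [>= k - t]. *)
Lemma mxrank_le_potential n (A : 'M[F]_n) (s : nat -> int) (e : int) k t :
  (forall i j, (i <= j < n)%N -> s j <= s i) -> (k < n)%N -> (t <= k)%N ->
  (forall a b : 'I_n, A a b != 0 -> e <= s a + s b) ->
  s t + s (k - t)%N < e -> (\rank A <= k)%N.
Proof.
move=> s_anti kn tk A_pot low.
rewrite -(subnKC tk); apply: mxrank_corner0; [lia | lia |] => a b ta tb.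
apply/eqP; apply: contraTT low => /A_pot e_le; rewrite -leNgt (le_trans e_le) //.
by rewrite lerD ?s_anti ?ta ?tb ?ltn_ord.
Qed.

End CornerRank.

Section AntitoneZeroSum.
Variables (n : nat) (s : nat -> int).
Hypothesis s_anti : forall i j, (i <= j <= n)%N -> s j <= s i.
Hypothesis s_sum0 : \sum_(0 <= i < n.+1) s i = 0.

Lemma sum_prefix_le k : (k <= n.+1)%N ->
  \sum_(0 <= i < k) s i <= (n.+1 - k)%:Z * - s n.
Proof.
move=> kn; have /eqP : \sum_(0 <= i < k) s i + \sum_(k <= i < n.+1) s i = 0.
  by rewrite -big_cat_nat.
rewrite addr_eq0 => /eqP ->; rewrite mulrN lerN2.
have -> : (n.+1 - k)%:Z * s n = \sum_(k <= i < n.+1) s n.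
  by rewrite sumr_const_nat -mulr_natl natz.
by apply: ler_sum_nat => i /andP [ki ilt]; apply: s_anti; lia.
Qed.

Lemma sum_antidiagonal_le k (e c : int) : (k <= n.+1)%N ->
  (forall t, (t < k)%N -> e <= s t + s (k.-1 - t) + c) ->
  k%:Z * e <= 2 * ((n.+1 - k)%:Z * - s n) + k%:Z * c.
Proof.
move=> kn e_le.
have -> : k%:Z * e = \sum_(0 <= t < k) e by rewrite sumr_const_nat subn0 -mulr_natl natz.
apply: le_trans (ler_sum_nat (G := fun t => s t + s (k.-1 - t) + c) _) _.
  by move=> t /andP [_]; apply: e_le.
have rev : \sum_(0 <= t < k) s (k.-1 - t)%N = \sum_(0 <= t < k) s t.
  rewrite big_nat_rev /= add0n; apply: eq_big_nat => t /andP [_ tk].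
  by congr s; lia.
rewrite !big_split /= rev sumr_const_nat subn0 -mulr2n -[c *+ k]mulr_natl natz.
by rewrite lerD2r mulr_natl lerMn2r sum_prefix_le ?orbT.
Qed.

End AntitoneZeroSum.

Section WeightsOfMonomials.
Variables (n : nat) (r : 'I_n.+1 -> int).

Local Notation lift_var := (widen_ord (leqnSn n)).

Lemma rweight_restr (m : 'X_{1..n.+1}) :
  rweight r m = \sum_(j < n) r (lift_var j) * (restr_mnm m j)%:Z
                + r ord_max * (m ord_max)%:Z.
Proof.
by rewrite /rweight big_ord_recr; congr (_ + _); apply: eq_bigr => j _; rewrite mnmE.
Qed.

Lemma sum_weight_mnm2 (a b : 'I_n) :
  \sum_(j < n) r (lift_var j) * ((U_(a) + U_(b))%MM j)%:Z
  = r (lift_var a) + r (lift_var b).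
Proof.
under eq_bigr do rewrite mnmDE !mnm1E PoszD mulrDr.
have pick c : \sum_(j < n) r (lift_var j) * (c == j : nat)%:Z = r (lift_var c).
  rewrite (bigD1 c) //= eqxx mulr1 big1 ?addr0 // => j /negPf.
  by rewrite eq_sym => ->; rewrite mulr0.
by rewrite big_split /= !pick.
Qed.

Lemma rweight_mnm1n (i : 'I_n.+1) k :
  rweight r (U_(i) *+ k)%MM = r i * k%:Z.
Proof.
rewrite /rweight (bigD1 i) //= mulmnE mnm1E eqxx mul1n big1 ?addr0 // => j ji.
by rewrite mulmnE mnm1E eq_sym (negPf ji) mul0n mulr0.
Qed.

End WeightsOfMonomials.

Section WeightVector.
Variables (n : nat) (r : 'I_n.+1 -> int).
Hypothesis r_weight : weight_vector r.

Lemma weight_vector_last_lt0 : r ord_max < 0.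
Proof.
case: r_weight => r_anti [i0 ri0] r_sum0; rewrite ltNge; apply: contra ri0 => rn_ge0.
apply/eqP/(psumr_eq0P _ r_sum0) => // j _; apply: le_trans rn_ge0 _.
by apply: r_anti; rewrite -ltnS.
Qed.

Lemma weight_vector_nonincreasing i j : (i <= j <= n)%N -> r (inord j) <= r (inord i).
Proof. by case: r_weight => r_anti _ _ /andP [ij jn]; apply: r_anti; rewrite !inordK //; lia. Qed.

Lemma weight_vector_sum0 : \sum_(0 <= i < n.+1) r (inord i) = 0.
Proof.
case: r_weight => _ _ r_sum0; rewrite big_mkord -[RHS]r_sum0.
by apply: eq_bigr => i _; rewrite inord_val.
Qed.

End WeightVector.

Lemma qf_matrix_neq0 (C : fieldType) n (q : {mpoly C[n]}) (a b : 'I_n) :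
  qf_matrix q a b != 0 -> q@_(U_(a) + U_(b))%MM != 0.
Proof.
rewrite mxE; have [<-|_] := eqVneq a b; last by apply: contra_neq => ->; rewrite mul0r.
by rewrite (_ : (U_(a) *+ 2)%MM = (U_(a) + U_(a))%MM) //; apply/mnmP => j; rewrite mulmnE mnmDE.
Qed.

Lemma mcoeff_hpart_eq0 (R : realType) n d j (f : {mpoly R[i][n.+1]}) mu :
  (forall m, m \in msupp f -> m ord_max = (d - j)%N -> restr_mnm m != mu) ->
  (hpart d j f)@_mu = 0.
Proof.
move=> not_mu; rewrite /hpart raddf_sum /= big_seq_cond.
rewrite big1 // => m /andP [m_f /eqP m_max]; rewrite mcoeffZ mcoeffX.
by rewrite (negPf (not_mu m m_f m_max)) mulr0.
Qed.

Lemma qf_matrix_hpart2_weight (R : realType) n d (r : 'I_n.+1 -> int)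
    (f : {mpoly R[i][n.+1]}) (e : int) (a b : 'I_n) :
  (forall m, m \in msupp f -> e <= rweight r m) ->
  qf_matrix (hpart d 2 f) a b != 0 ->
  e <= r (widen_ord (leqnSn n) a) + r (widen_ord (leqnSn n) b)
       + r ord_max * (d - 2)%:Z.
Proof.
move=> f_ge /qf_matrix_neq0; rewrite leNgt; apply: contra => w_lt.
apply/eqP/mcoeff_hpart_eq0 => m m_f m_max; apply/eqP => restr_m.
by have := f_ge m m_f; rewrite rweight_restr restr_m sum_weight_mnm2 m_max leNgt w_lt.
Qed.

Lemma rat_bound_ltE (N d : nat) (m : int) : (0 < d)%N ->
  (N%:R / d%:R - 1 < m%:Q) = (N%:Z < (m + 1) * d%:Z).
Proof.
move=> d_gt0; rewrite ltrBlDr ltr_pdivrMr ?ltr0n // -(ltr_int rat).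
by rewrite intrM intrD !pmulrn.
Qed.

Lemma rat_bound_leE (N d : nat) (m : int) : (0 < d)%N ->
  (N%:R / d%:R - 1 <= m%:Q) = (N%:Z <= (m + 1) * d%:Z).
Proof.
move=> d_gt0; rewrite lerBlDr ler_pdivrMr ?ltr0n // -(ler_int rat).
by rewrite intrM intrD !pmulrn.
Qed.

Lemma qf_rank_hpart2_le (R : realType) n d (r : 'I_n.+1 -> int)
    (f : {mpoly R[i][n.+1]}) (e : int) (K : nat) :
  (2 <= d)%N -> weight_vector r ->
  (forall m, m \in msupp f -> e <= rweight r m) ->
  (2 * n.+1%:Z - K.+1%:Z * d%:Z) * - r ord_max < K.+1%:Z * e ->
  (qf_rank (hpart d 2 f) <= K)%N.
Proof.
move=> d_ge2 r_weight f_ge bound.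
have [n_le_K|K_lt_n] := leqP n K; first exact: leq_trans (rank_leq_row _) n_le_K.
pose s j := r (inord j); pose c := r ord_max * (d - 2)%:Z.
have s_lift (a : 'I_n) : s a = r (widen_ord (leqnSn n) a).
  by rewrite /s; congr r; apply: val_inj; rewrite /= inordK // leqW.
have s_last : s n = r ord_max by rewrite /s; congr r; apply: val_inj; rewrite /= inordK.
have s_anti := weight_vector_nonincreasing r_weight.
case: (boolP [exists t : 'I_K.+1, s t + s (K - t)%N < e - c]) => [/existsP [t low]|/existsPn high].
  apply: (mxrank_le_potential (s := s) _ K_lt_n _ _ low).
  - by move=> i j /andP [ij jn]; apply: s_anti; lia.
  - by rewrite -ltnS.
  - by move=> a b /(qf_matrix_hpart2_weight f_ge); rewrite !s_lift lerBlDr.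
have e_le t : (t < K.+1)%N -> e <= s t + s (K.+1.-1 - t)%N + c.
  by move=> tK; have := high (Ordinal tK); rewrite -leNgt lerBlDr.
have := sum_antidiagonal_le (s := s) (k := K.+1) s_anti
  (weight_vector_sum0 r_weight) (ltnW K_lt_n) e_le.
suff -> : 2 * ((n.+1 - K.+1)%:Z * - s n) + K.+1%:Z * c
          = (2 * n.+1%:Z - K.+1%:Z * d%:Z) * - r ord_max by rewrite leNgt bound.
rewrite s_last /c -!subzn //; last exact: ltnW.
by ring.
Qed.

Theorem lemma5p1 (R : realType) (n d : nat) (r : 'I_n.+1 -> int)
    (f : {mpoly R[i][n.+1]}) :
  (2 <= n)%N -> (3 <= d)%N -> weight_vector r ->
  M_ge0 d r f -> f != 0 ->
  [/\ f@_(U_(ord_max) *+ d)%MM = 0,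
      (forall m0 : int,
         (m0%:Q > (2 * n.+1)%:R / d%:R - 1) ->
         ((m0 - 1)%:Q <= (2 * n.+1)%:R / d%:R - 1) ->
         (qf_rank (hpart d 2 f) : int) <= m0) &
      (M_gt0 d r f ->
       forall m0 : int,
         (m0%:Q >= (2 * n.+1)%:R / d%:R - 1) ->
         ((m0 - 1)%:Q < (2 * n.+1)%:R / d%:R - 1) ->
         (qf_rank (hpart d 2 f) : int) <= m0)].
Proof.
move=> _ d_ge3 r_weight [_ f_ge0] _; have rn_lt0 := weight_vector_last_lt0 r_weight.
have d_gt0 : (0 < d)%N by lia.
split.
- by apply/eqP/contraT; rewrite -mcoeff_msupp => /f_ge0; rewrite rweight_mnm1n; nia.
- move=> m0; rewrite rat_bound_ltE // => m0_gt _.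
  case: m0 m0_gt => [K|k] m0_gt; last by rewrite NegzE in m0_gt; nia.
  by rewrite lez_nat; apply: (qf_rank_hpart2_le _ r_weight f_ge0); nia.
- move=> [_ f_gt0] m0; rewrite rat_bound_leE // => m0_ge _.
  case: m0 m0_ge => [K|k] m0_ge; last by rewrite NegzE in m0_ge; nia.
  have f_ge1 m : m \in msupp f -> 1 <= rweight r m by move/f_gt0.
  by rewrite lez_nat; apply: (qf_rank_hpart2_le _ r_weight f_ge1); nia.
Qed.
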